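(* Let $\langle\mathbf{B},\mathbf{I}\rangle$ be a Bochvar system. Let $\mathbb{A}_{\mathbb{B}}$ be the semilattice direct system with: - index join-semilattice $I$ ordered dually to $\mathbf{B}$, with least element $1$; - fibres $\mathbf{B}/[i)$ for $i\in I$; - maps $p_{ij}(a/[i))=a/[j)$ for $j\le_{\mathbf{B}}i$. Then the Płonka sum of $\mathbb{A}_{\mathbb{B}}$, an algebra of type $\langle\wedge,\vee,\neg,0,1\rangle$, is the $\{\wedge,\vee,\neg,0,1\}$-reduct of a unique Bochvar algebra. In other words, there is exactly one unary operation $J_2$ on it making it a Bochvar algebra.
   Context: A Bochvar system is a pair $\langle\mathbf{B},\mathbf{I}\rangle$ where $\mathbf{B}$ is a Boolean algebra and $I\subseteq B$ contains $1$ and is closed under $\wedge$. $[i)$ is the principal filter of $\mathbf{B}$ generated by $i$. $\mathbf{B}/[i)$ is the quotient by $\{\langle a,b\rangle:(\neg a\vee b)\wedge(\neg b\vee a)\in[i)\}$. Płonka sum of a semilattice direct system $\langle\{\mathbf{A}_i\},\langle I,\vee,i_0\rangle,\{p_{ij}\}\rangle$: the universe is the disjoint union of the $A_i$. Operations are $g(a_1,\dots,a_n)=g^{\mathbf{A}_k}(p_{i_1k}(a_1),\dots,p_{i_nk}(a_n))$ for $a_m\in A_{i_m}$ and $k=\bigvee i_m$; constants are those of $\mathbf{A}_{i_0}$. $\mathbf{WK}^e$ is the three-element algebra on $\{0,\tfrac12,1\}$ of type $\langle\wedge,\vee,\neg,J_2,0,1\rangle$. Its operations are: - $\neg$ swaps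 $0,1$ and fixes $\tfrac12$; - $\wedge,\vee$ are Boolean on $\{0,1\}$ and return $\tfrac12$ whenever some argument is $\tfrac12$; - $J_2(1)=1$ and $J_2(\tfrac12)=J_2(0)=0$. Bochvar algebras are the members of $ISP(\mathbf{WK}^e)$. *)

From HB Require Import structures.
From mathcomp Require Import all_boot all_order generic_quotient.

Set Implicit Arguments.
Unset Strict Implicit.
Unset Printing Implicit Defensive.

Import Order.Theory.
Local Open Scope order_scope.
Local Open Scope quotient_scope.

Inductive WK := wk0 | wkh | wk1.   (* 0, 1/2, 1 *)

Definition wk_neg (x : WK) : WK :=
  match x with wk0 => wk1 | wkh => wkh | wk1 => wk0 end.

Definition wk_and (x y : WK) : WK :=
  match x, y with
  | wkh, _ | _, wkh => wkh
  | wk1, wk1 => wk1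
  | _, _ => wk0
  end.

Definition wk_or (x y : WK) : WK :=
  match x, y with
  | wkh, _ | _, wkh => wkh
  | wk0, wk0 => wk0
  | _, _ => wk1
  end.

Definition wk_J2 (x : WK) : WK :=
  match x with wk1 => wk1 | _ => wk0 end.

(* An algebra (A; meet, join, neg, J, zero, one) of type
   <and, or, neg, J2, 0, 1> is a Bochvar algebra iff it belongs to
   ISP(WK^e): it embeds (injective homomorphism) into a direct power
   X -> WK^e for some index set X. *)
Definition is_bochvar (A : Type) (meet join : A -> A -> A) (neg J : A -> A)
  (zero one : A) : Prop :=
  exists (X : Type) (h : A -> X -> WK),
    injective h /\
    (forall a b, h (meet a b) = fun x => wk_and (h a x) (h b x)) /\
    (forall a b, h (join a b) = fun x => wk_or (h a x) (h b x)) /\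
    (forall a, h (neg a) = fun x => wk_neg (h a x)) /\
    (forall a, h (J a) = fun x => wk_J2 (h a x)) /\
    h zero = (fun _ => wk0) /\
    h one = (fun _ => wk1).

Section Fibre.
Context {disp : Order.disp_t} {B : ctbDistrLatticeType disp}.

(* <a,b> in the congruence of [i)  iff  (~a \/ b) /\ (~b \/ a) \in [i) *)
Definition fcong (i : B) : rel B :=
  fun a b => i <= (~` a `|` b) `&` (~` b `|` a).

Lemma fcong_refl i : reflexive (fcong i).
Proof. by move=> a; rewrite /fcong joinCx meetxx lex1. Qed.

Lemma fcong_sym i : symmetric (fcong i).
Proof. by move=> a b; rewrite /fcong meetC. Qed.

Lemma fcong_aux (a b c : B) : (~` a `|` b) `&` (~` b `|` c) <= ~` a `|` c.
Proof.
rewrite meetUl; apply: leU2; first exact: leIl.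
by rewrite meetUr meetxC join0x leIr.
Qed.

Lemma fcong_trans i : transitive (fcong i).
Proof.
move=> b a c; rewrite /fcong !lexI => /andP[h1 h2] /andP[h3 h4].
apply/andP; split.
  apply: le_trans (fcong_aux a b c); by rewrite lexI h1 h3.
apply: le_trans (fcong_aux c b a); by rewrite lexI h4 h2.
Qed.

Canonical fcong_equiv (i : B) :=
  EquivRel (fcong i) (@fcong_refl i) (@fcong_sym i) (@fcong_trans i).

Definition fibre (i : B) := {eq_quot fcong_equiv i}.

Definition fmeet i (x y : fibre i) : fibre i := \pi_(fibre i) (repr x `&` repr y).
Definition fjoin i (x y : fibre i) : fibre i := \pi_(fibre i) (repr x `|` repr y).
Definition fneg i (x : fibre i) : fibre i := \pi_(fibre i) (~` repr x).
Definition fzero i : fibre i := \pi_(fibre i) \bot.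
Definition fone i : fibre i := \pi_(fibre i) \top.

Definition ptrans i j (x : fibre i) : fibre j := \pi_(fibre j) (repr x).

(* Index join-semilattice: I ordered dually to B, so i v_I j = i /\ j *)
(* (the join of the indices is the B-meet) and the least index is 1.  *)
Variable I : {pred B}.
Hypothesis I_meet : {in I &, forall i j, i `&` j \in I}.
Hypothesis I_top : \top \in I.

Definition Idx := {i : B | i \in I}.
Definition idx_join (i j : Idx) : Idx :=
  exist _ (val i `&` val j) (I_meet (valP i) (valP j)).
Definition idx_bot : Idx := exist _ \top I_top.

Definition plonka := {i : Idx & fibre (val i)}.

Definition pl_meet (x y : plonka) : plonka :=
  let k := idx_join (projT1 x) (projT1 y) in
  existT _ k (fmeet (ptrans (val k) (projT2 x)) (ptrans (val k) (projT2 y))).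
Definition pl_join (x y : plonka) : plonka :=
  let k := idx_join (projT1 x) (projT1 y) in
  existT _ k (fjoin (ptrans (val k) (projT2 x)) (ptrans (val k) (projT2 y))).
Definition pl_neg (x : plonka) : plonka :=
  existT _ (projT1 x) (fneg (projT2 x)).
Definition pl_zero : plonka := existT _ idx_bot (fzero (val idx_bot)).
Definition pl_one : plonka := existT _ idx_bot (fone (val idx_bot)).

End Fibre.

From HB Require Import structures.
From mathcomp Require Import all_boot all_order generic_quotient.
From mathcomp Require Import boolp classical_sets.

(* The Boolean homomorphisms f : B -> bool separate the points of B (prime
   ideal theorem, via Zorn's lemma).  Each such f induces a homomorphism of the
   Płonka sum into WK^e, sending a/[i) to 1/2 when f i is false and to f a
   otherwise; together they separate points, so J2 (a/[i)) := (a /\ i)/[1]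
   embeds the Płonka sum into a power of WK^e.  Conversely, any J2 making the
   sum a Bochvar algebra satisfies quasi-identities valid in WK^e; instantiated
   with the Boolean element J2 (x \/ ~x) = i/[1], they force every induced
   homomorphism to send J2 x to J2 of the image of x. *)

Set Implicit Arguments.
Unset Strict Implicit.
Unset Printing Implicit Defensive.

Import Order.Theory.
Local Open Scope order_scope.
Local Open Scope quotient_scope.

Section BoolHom.
Context {disp : Order.disp_t} {B : ctbDistrLatticeType disp}.

Record bool_hom := BoolHom {
  bhom :> B -> bool;
  bhomI : forall a b, bhom (a `&` b) = bhom a && bhom b;
  bhomC : forall a, bhom (~` a) = ~~ bhom a;
  bhomT : bhom \top }.

Implicit Types (f : bool_hom) (a b c : B).

Lemma bhomU f a b : f (a `|` b) = f a || f b.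
Proof. by rewrite -[a `|` b]complK complU bhomC bhomI !bhomC negb_and !negbK. Qed.

Lemma bhom0 f : f \bot = false.
Proof. by rewrite -compl1 bhomC bhomT. Qed.

Lemma bhom_le f a b : a <= b -> f a -> f b.
Proof. by move=> /meet_l <-; rewrite bhomI => /andP[]. Qed.

Definition ideal_avoiding c (S : set B) : Prop :=
  [/\ forall x y, S x -> S y -> S (x `|` y),
      forall x y, S x -> y <= x -> S y & ~ S c].

Lemma ex_maximal_ideal_avoiding c :
  exists M, ideal_avoiding c M /\
    forall N, ideal_avoiding c N -> (forall x, M x -> N x) -> forall x, N x -> M x.
Proof.
have chain_ub F : (forall S, F S -> ideal_avoiding c S) -> total_on F subset ->
    ideal_avoiding c (fun x => exists2 S, F S & S x).
  move=> Fideal Ftot; split.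
  - move=> x y [S FS Sx] [T FT Ty].
    have [ST|TS] := Ftot _ _ FS FT.
      by exists T => //; have [TU _ _] := Fideal _ FT; apply: TU (ST _ Sx) Ty.
    by exists S => //; have [SU _ _] := Fideal _ FS; apply: SU Sx (TS _ Ty).
  - move=> x y [S FS Sx] yx; exists S => //.
    by have [_ SD _] := Fideal _ FS; apply: SD Sx yx.
  - by move=> [S FS Sc]; have [_ _ nSc] := Fideal _ FS.
have [M [Mideal Mmax]] := Zorn_bigcup chain_ub.
exists M; split=> // N Nideal MN x Nx; apply: contrapT => nMx.
by apply: (Mmax N) => //; split=> // NM; apply: nMx; apply: NM.
Qed.

Section MaximalIdeal.
Variables (c : B) (M : set B).
Hypothesis c_neq0 : c != \bot.
Hypothesis M_ideal : ideal_avoiding c M.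
Hypothesis M_max :
  forall N, ideal_avoiding c N -> (forall x, M x -> N x) -> forall x, N x -> M x.

Let MU : forall x y, M x -> M y -> M (x `|` y). Proof. by case: M_ideal. Qed.
Let MD : forall x y, M x -> y <= x -> M y. Proof. by case: M_ideal. Qed.
Let Mc : ~ M c. Proof. by case: M_ideal. Qed.

Lemma max_ideal_bot : M \bot.
Proof.
apply: (M_max (N := fun y => y = \bot \/ M y)); last by left.
- split.
  + by move=> x y [->|Mx] [->|My]; rewrite ?joinx0 ?join0x; [left|right|right|right; apply: MU].
  + by move=> x y [->|Mx] yx; [left; apply/eqP; rewrite -lex0|right; apply: MD yx].
  + by case=> [/eqP|//]; apply/negP.
- by move=> x Mx; right.
Qed.

Lemma notin_max_ideal x : ~ M x -> exists2 m, M m & c <= m `|` x.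
Proof.
move=> nMx; apply: contrapT => nc; apply: nMx.
apply: (M_max (N := fun y => exists2 m, M m & y <= m `|` x)).
- split.
  + move=> y z [m1 Mm1 ym1] [m2 Mm2 zm2]; exists (m1 `|` m2); first exact: MU.
    by rewrite leUx (le_trans ym1) ?(le_trans zm2) // leU2 ?leUl ?leUr.
  + by move=> y z [m Mm ym] zy; exists m => //; apply: le_trans ym.
  + by move=> [m Mm cm]; apply: nc; exists m.
- by move=> y My; exists y; rewrite ?leUl.
- by exists \bot; [exact: max_ideal_bot | rewrite join0x].
Qed.

Lemma max_ideal_prime a b : M (a `&` b) -> M a \/ M b.
Proof.
move=> Mab; apply: contrapT => /not_orP[/notin_max_ideal[m1 Mm1 c1] /notin_max_ideal[m2 Mm2 c2]].
apply: Mc; apply: MD (MU (MU Mm1 Mm2) Mab) _.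
have c_le : c <= (m1 `|` a) `&` (m2 `|` b) by rewrite lexI c1 c2.
by rewrite (le_trans c_le) // joinIr leI2 // leU2 ?leUl ?leUr.
Qed.

Lemma max_ideal_meet a b : M (a `&` b) <-> M a \/ M b.
Proof.
split; first exact: max_ideal_prime.
by case=> Mx; apply: MD Mx _; rewrite ?leIl ?leIr.
Qed.

Lemma max_ideal_compl a : M (~` a) <-> ~ M a.
Proof.
split=> [MCa Ma|nMa]; first by apply: Mc; apply: MD (MU Ma MCa) _; rewrite joinxC lex1.
have M_bot : M (a `&` ~` a) by rewrite meetxC; apply: max_ideal_bot.
by case: (max_ideal_prime M_bot).
Qed.

Lemma max_ideal_top : ~ M \top.
Proof. by move=> MT; apply: Mc; apply: MD MT (lex1 c). Qed.

Definition max_ideal_hom : bool_hom.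
Proof.
apply: (@BoolHom (fun x => ~~ `[< M x >])) => [a b|a|].
- by rewrite (asbool_equiv_eq (max_ideal_meet a b)) asbool_or negb_or.
- by rewrite (asbool_equiv_eq (max_ideal_compl a)) asbool_neg.
- by rewrite asboolF //; apply: max_ideal_top.
Defined.

End MaximalIdeal.

Lemma ex_bool_hom c : c != \bot -> exists f : bool_hom, f c.
Proof.
move=> c_neq0; have [M [Mideal Mmax]] := ex_maximal_ideal_avoiding c.
exists (max_ideal_hom c_neq0 Mideal Mmax) => /=.
by apply/negP => /asboolP; case: Mideal.
Qed.

Lemma le_bool_hom a b : (forall f : bool_hom, f a -> f b) -> a <= b.
Proof.
move=> ab; apply: contraT; rewrite -[b]complK -disj_leC => /ex_bool_hom[f].
by rewrite bhomI bhomC => /andP[/ab ->].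
Qed.

Lemma eq_bool_hom a b : (forall f : bool_hom, f a = f b) -> a = b.
Proof. by move=> ab; apply: le_anti; rewrite !le_bool_hom // => f; rewrite ab. Qed.

Lemma fcongP i a b : reflect (forall f : bool_hom, f i -> f a = f b) (fcong i a b).
Proof.
apply: (iffP idP) => [iab f fi|ab].
  by move: (bhom_le iab fi); rewrite bhomI !bhomU !bhomC; case: (f a); case: (f b).
by apply: le_bool_hom => f fi; rewrite bhomI !bhomU !bhomC (ab f fi); case: (f b).
Qed.

Lemma bhom_repr_pi f i a : f i -> f (repr (\pi_(fibre i) a)) = f a.
Proof.
move=> fi; have /fcongP -> // : fcong i (repr (\pi_(fibre i) a)) a.
by apply/(eqquotP (fibre i)); rewrite reprK.
Qed.

End BoolHom.

Section BochvarLaws.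
Variables (A : Type) (meet join : A -> A -> A) (neg J : A -> A) (zero one : A).

Definition J2_laws : Prop := forall x,
  [/\ join (J x) (neg (J x)) = one,
      meet (J x) x = x,
      meet (neg (J x)) (neg x) = neg x &
      forall v, join v (neg v) = one ->
        meet v (join x (neg x)) = join x (neg x) -> meet (J x) v = J x].

Lemma bochvar_J2_laws : is_bochvar meet join neg J zero one -> J2_laws.
Proof.
case=> X [h [h_inj [hI [hU [hN [hJ [_ h1]]]]]]] x.
have hE := (hI, hU, hN, hJ, h1).
split=> [|||v]; try by apply: h_inj; rewrite !hE; apply: funext => t; case: (h x t).
move=> /(congr1 h) v_bool /(congr1 h) v_def; apply: h_inj; rewrite !hE; apply: funext => t.
move: v_bool v_def => /(congr1 (@^~ t)) + /(congr1 (@^~ t)); rewrite !hE /=.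
by case: (h x t); case: (h v t).
Qed.

End BochvarLaws.

Lemma wk_J2_unique u x :
  wk_or u (wk_neg u) = wk1 -> wk_and u x = x -> wk_and (wk_neg u) (wk_neg x) = wk_neg x ->
  wk_and u (wk_J2 (wk_or x (wk_neg x))) = u -> u = wk_J2 x.
Proof. by case: u; case: x. Qed.

Section PlonkaJ2.
Context {disp : Order.disp_t} {B : ctbDistrLatticeType disp}.
Variable I : {pred B}.
Hypothesis I_meet : {in I &, forall i j, i `&` j \in I}.
Hypothesis I_top : \top \in I.

Local Notation plonka := (plonka I).
Local Notation pmeet := (pl_meet I_meet).
Local Notation pjoin := (pl_join I_meet).
Local Notation pneg := (@pl_neg _ _ I).
Local Notation pzero := (pl_zero I_top).
Local Notation pone := (pl_one I_top).

Implicit Types (f : @bool_hom _ B) (x y : plonka).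

Definition pl_eval f x : WK :=
  if f (val (projT1 x)) then (if f (repr (projT2 x)) then wk1 else wk0) else wkh.

Definition pl_J x : plonka :=
  existT _ (idx_bot I_top) (\pi_(fibre \top) (repr (projT2 x) `&` val (projT1 x))).

Lemma pl_eval_meet f x y : pl_eval f (pmeet x y) = wk_and (pl_eval f x) (pl_eval f y).
Proof.
case: x y => i a [j b]; rewrite /pl_eval /= bhomI.
case fi: (f (val i)); case fj: (f (val j)) => //=; try by case: (f (repr a)).
have fij : f (val i `&` val j) by rewrite bhomI fi fj.
by rewrite !bhom_repr_pi // bhomI !bhom_repr_pi //; case: (f (repr a)); case: (f (repr b)).
Qed.

Lemma pl_eval_join f x y : pl_eval f (pjoin x y) = wk_or (pl_eval f x) (pl_eval f y).
Proof.
case: x y => i a [j b]; rewrite /pl_eval /= bhomI.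
case fi: (f (val i)); case fj: (f (val j)) => //=; try by case: (f (repr a)).
have fij : f (val i `&` val j) by rewrite bhomI fi fj.
by rewrite !bhom_repr_pi // bhomU !bhom_repr_pi //; case: (f (repr a)); case: (f (repr b)).
Qed.

Lemma pl_eval_neg f x : pl_eval f (pneg x) = wk_neg (pl_eval f x).
Proof.
case: x => i a; rewrite /pl_eval /=; case fi: (f (val i)) => //.
by rewrite bhom_repr_pi // bhomC; case: (f (repr a)).
Qed.

Lemma pl_eval_J f x : pl_eval f (pl_J x) = wk_J2 (pl_eval f x).
Proof.
case: x => i a; rewrite /pl_eval /= bhomT bhom_repr_pi ?bhomT // bhomI.
by case: (f (val i)); case: (f (repr a)).
Qed.

Lemma pl_eval_zero f : pl_eval f pzero = wk0.
Proof. by rewrite /pl_eval /= bhomT bhom_repr_pi ?bhomT // bhom0. Qed.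

Lemma pl_eval_one f : pl_eval f pone = wk1.
Proof. by rewrite /pl_eval /= bhomT bhom_repr_pi ?bhomT. Qed.

Definition pl_evalE :=
  (pl_eval_meet, pl_eval_join, pl_eval_neg, pl_eval_J, pl_eval_zero, pl_eval_one).

Lemma pl_eval_inj x y : (forall f, pl_eval f x = pl_eval f y) -> x = y.
Proof.
case: x y => i a [j b] xy.
have /val_inj eq_ij : val i = val j.
  apply: eq_bool_hom => f; move: (xy f); rewrite /pl_eval /=.
  by case: (f (val i)); case: (f (val j)); case: (f (repr a)); case: (f (repr b)).
subst j; congr existT; rewrite -[a]reprK -[b]reprK; apply/eqquotP/fcongP => f fi.
by move: (xy f); rewrite /pl_eval /= fi; case: (f (repr a)); case: (f (repr b)).
Qed.

Lemma pl_J_bochvar : is_bochvar pmeet pjoin pneg pl_J pzero pone.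
Proof.
exists (@bool_hom _ B), (fun x f => pl_eval f x).
split; first by move=> x y xy; apply: pl_eval_inj => f; apply: (congr1 (@^~ f) xy).
by do !split=> *; apply: funext => f; rewrite pl_evalE.
Qed.

Lemma pl_J2_laws_unique J : J2_laws pmeet pjoin pneg J pone -> J =1 pl_J.
Proof.
move=> J_laws x; have [Jx_bool Jx_meet Jx_meetN Jx_min] := J_laws x.
set d := pl_J (pjoin x (pneg x)).
have d_bool : pjoin d (pneg d) = pone.
  by apply: pl_eval_inj => f; rewrite !pl_evalE; case: (pl_eval f x).
have d_def : pmeet d (pjoin x (pneg x)) = pjoin x (pneg x).
  by apply: pl_eval_inj => f; rewrite !pl_evalE; case: (pl_eval f x).
apply: pl_eval_inj => f; rewrite pl_eval_J; apply: wk_J2_unique.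
- by rewrite -pl_eval_neg -pl_eval_join Jx_bool pl_eval_one.
- by rewrite -pl_eval_meet Jx_meet.
- by rewrite -!pl_eval_neg -pl_eval_meet Jx_meetN.
- by rewrite -pl_eval_neg -pl_eval_join -pl_eval_J -pl_eval_meet Jx_min.
Qed.

End PlonkaJ2.

Theorem theorem3p3 (disp : Order.disp_t) (B : ctbDistrLatticeType disp)
  (I : {pred B}) (I_top : (Order.top : B) \in I)
  (I_meet : {in I &, forall i j, Order.meet i j \in I}) :
  exists! J : plonka I -> plonka I,
    is_bochvar (pl_meet I_meet) (pl_join I_meet) (@pl_neg _ _ I) J
      (pl_zero I_top) (pl_one I_top).
Proof.
exists (pl_J I_top); split; first exact: pl_J_bochvar.
move=> J J_bochvar; apply: funext => x.
by rewrite (pl_J2_laws_unique (bochvar_J2_laws J_bochvar)).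
Qed.
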